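(* Let $n = 2k+1 > 3$ be an odd integer and $m = 3n-6 = 6k-3$. If an edge-coloring of a complete graph contains no rainbow $n$-cycle, then it contains no rainbow $m$-cycle.
   Context: A coloring is an arbitrary (not necessarily proper) assignment of colors, from an arbitrary set, to the edges of an undirected complete graph; the graph may be finite or infinite. A rainbow $n$-cycle is a cycle through $n$ distinct vertices whose $n$ edges all receive pairwise distinct colors. *)

From mathcomp Require Import all_boot.
Set Implicit Arguments. Unset Strict Implicit. Unset Printing Implicit Defensive.

(* An edge-colouring of the complete graph on vertex type V (finite or
   infinite) with colours in C: a function on pairs of vertices, symmetric,
   so that it really assigns one colour to each (unordered) edge {x,y},
   x <> y.  Values on the diagonal are irrelevant. *)
Definition edge_coloring (V C : Type) (c : V -> V -> C) : Prop :=
  forall x y : V, c x y = c y x.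

Definition rainbow_cycle (V C : Type) (c : V -> V -> C) (n : nat) : Prop :=
  3 <= n /\
  exists v : nat -> V,
    (forall i j, i < n -> j < n -> v i = v j -> i = j) /\
    (forall i j, i < n -> j < n ->
       c (v i) (v (i.+1 %% n)) = c (v j) (v (j.+1 %% n)) -> i = j).

(* Write the rainbow (6k-3)-cycle as a (6k-3)-periodic walk w.  With no rainbow
   (2k+1)-cycle, a chord {w i, w (i+2k)} closing 2k consecutive edges must repeat
   one of their colours, and the (2k+1)-cycle through the chords at i and i+4k-2
   then forces the chord at i to take the colour of edge i, or else the chord at
   i-(2k-1) does.  At the three positions k-1, 3k-2, 5k-3, a third of the cycle
   apart, the same alternative must be chosen; the second choice is the mirror
   image of the first.  In the first case look at the triangle on the vertices
   0, 2k-1, 4k-2: more (2k+1)-cycles built from its sides and arcs of w show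
   that the colour of each side lies on the first k edges of its own arc or of
   the next one, and that the next side then takes the other option.  Three
   steps around the triangle bring the first side back with the opposite
   option, so its colour lies on two disjoint sets of edges. *)

From mathcomp Require Import all_boot zify.
From Stdlib Require Import Classical.

Set Implicit Arguments. Unset Strict Implicit. Unset Printing Implicit Defensive.

Ltac case_ifs := repeat match goal with |- context [if ?b then _ else _] => case: ifP => ? end.

Section Walks.
Variables (V C : Type) (c : V -> V -> C).
Hypothesis hc : edge_coloring c.

Definition walk_color (w : nat -> V) t := c (w t) (w t.+1).

Definition arc_color w lo hi x := exists2 t, lo <= t < hi & walk_color w t = x.

Definition rainbow_path w L :=
  (forall i j, i <= L -> j <= L -> w i = w j -> i = j) /\
  (forall i j, i < L -> j < L -> walk_color w i = walk_color w j -> i = j).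

Definition cycle_color (w : nat -> V) (p : nat -> nat) n i := c (w (p i)) (w (p (i.+1 %% n))).

Lemma walk_color_shift w s t : walk_color (fun i => w (s + i)) t = walk_color w (s + t).
Proof. by rewrite /walk_color addnS. Qed.

Lemma arc_color_shift w s lo hi x :
  arc_color (fun i => w (s + i)) lo hi x <-> arc_color w (s + lo) (s + hi) x.
Proof.
split=> -[t ht <-].
- by exists (s + t); rewrite ?walk_color_shift //; lia.
- by exists (t - s); rewrite ?walk_color_shift ?subnKC //; lia.
Qed.

Lemma arc_color_widen w lo hi lo' hi' x :
  arc_color w lo hi x -> lo' <= lo -> hi <= hi' -> arc_color w lo' hi' x.
Proof. by case=> t ht <- *; exists t => //; lia. Qed.

Lemma arc_color_empty w lo x : ~ arc_color w lo lo x.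
Proof. by case=> t; lia. Qed.

Lemma walk_color_rev w t : c (w t.+1) (w t) = walk_color w t.
Proof. exact: hc. Qed.

Lemma rainbow_cycle_of_path w L n (p q : nat -> nat) (S : seq nat) :
  rainbow_path w L -> 3 <= n ->
  (forall i, i < n -> p i <= L) ->
  (forall i j, i < n -> j < n -> p i = p j -> i = j) ->
  (forall i, i < n -> i \notin S -> q i < L /\ cycle_color w p n i = walk_color w (q i)) ->
  (forall i j, i < n -> j < n -> i \notin S -> j \notin S -> q i = q j -> i = j) ->
  (forall s i, s \in S -> i < n -> i \notin S -> walk_color w (q i) <> cycle_color w p n s) ->
  {in S &, injective (cycle_color w p n)} ->
  rainbow_cycle c n.
Proof.
move=> [w_inj col_inj] n3 pL p_inj qP q_inj chord_fresh chord_inj.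
split=> //; exists (fun i => w (p i)); split.
  by move=> i j hi hj /(w_inj _ _ (pL _ hi) (pL _ hj)) /p_inj; apply.
move=> i j hi hj; rewrite -/(cycle_color w p n i) -/(cycle_color w p n j).
case: (boolP (i \in S)) => iS; case: (boolP (j \in S)) => jS.
- exact: chord_inj.
- by have [_ ->] := qP _ hj jS => /esym /chord_fresh; case.
- by have [_ ->] := qP _ hi iS => /chord_fresh; case.
- have [qi ->] := qP _ hi iS; have [qj ->] := qP _ hj jS.
  by move=> /(col_inj _ _ qi qj) /q_inj; apply.
Qed.

Lemma rainbow_cycle_arc_chord w L a :
  rainbow_path w L -> 2 <= a <= L -> ~ arc_color w 0 a (c (w 0) (w a)) ->
  rainbow_cycle c a.+1.
Proof.
move=> wP aL fresh.
have chordE : cycle_color w id a.+1 a = c (w 0) (w a).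
  by rewrite /cycle_color modnn hc.
apply: (@rainbow_cycle_of_path w L a.+1 id id [:: a]) => //; try lia.
- move=> i hi; rewrite inE => /eqP ia; split; first lia.
  by rewrite /cycle_color modn_small //; lia.
- move=> s i; rewrite !inE => /eqP-> hi /eqP ia; rewrite chordE => e.
  by apply: fresh; exists i => //; lia.
- by move=> s s'; rewrite !inE => /eqP-> /eqP->.
Qed.

(* The cycle 0, 1, ..., a, d, d-1, ..., b; its chords are {a, d} and {b, 0}. *)
Lemma rainbow_cycle_two_arcs w L a b d :
  rainbow_path w L -> 0 < a < b -> b <= d <= L ->
  ~ (arc_color w 0 a (c (w a) (w d)) \/ arc_color w b d (c (w a) (w d))) ->
  ~ (arc_color w 0 a (c (w b) (w 0)) \/ arc_color w b d (c (w b) (w 0))) ->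
  c (w a) (w d) <> c (w b) (w 0) ->
  rainbow_cycle c (a + (d - b) + 2).
Proof.
move=> wP ab bd x_fresh y_fresh xy.
set n := a + (d - b) + 2.
pose p i := if i <= a then i else d + a.+1 - i.
pose q i := if i < a then i else d + a - i.
have chord1 : cycle_color w p n a = c (w a) (w d).
  rewrite /cycle_color modn_small /p; try lia.
  by case_ifs; try lia; do 2 f_equal; lia.
have chord2 : cycle_color w p n n.-1 = c (w b) (w 0).
  rewrite /cycle_color prednK ?modnn /p; try lia.
  by case_ifs; try lia; do 2 f_equal; lia.
have edgeP i : i < n -> i \notin [:: a; n.-1] ->
    (q i < a \/ b <= q i < d) /\ cycle_color w p n i = walk_color w (q i).
  rewrite !inE => hi /norP[/eqP ia /eqP in1].
  rewrite /cycle_color modn_small /p /q; last by lia.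
  case_ifs; try lia; split; try lia.
  - by [].
  - by rewrite -walk_color_rev; do 2 f_equal; lia.
apply: (@rainbow_cycle_of_path w L n p q [:: a; n.-1]) => //.
- lia.
- by move=> i hi; rewrite /p; case_ifs; lia.
- by move=> i j hi hj; rewrite /p; case_ifs; lia.
- by move=> i hi iS; have [hq ->] := edgeP i hi iS; split=> //; lia.
- move=> i j hi hj; rewrite !inE => /norP[/eqP ? /eqP ?] /norP[/eqP ? /eqP ?].
  by rewrite /q; case_ifs; lia.
- move=> s i + hi iS; have [hq _] := edgeP i hi iS.
  rewrite !inE => /orP[]/eqP->; rewrite ?chord1 ?chord2 => e.
  + by apply: x_fresh; case: hq => hq; [left | right]; exists (q i).
  + by apply: y_fresh; case: hq => hq; [left | right]; exists (q i).
- move=> s s'; rewrite !inE => /orP[]/eqP-> /orP[]/eqP->; rewrite ?chord1 ?chord2 //.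
  all: by move=> e; case: xy; rewrite e.
Qed.

(* The cycle 0, 1, ..., a, b, b+1, ..., d, e; its chords are {a, b}, {d, e} and {e, 0}. *)
Lemma rainbow_cycle_three_arcs w L a e b d :
  rainbow_path w L -> 0 < a < e -> e < b <= d -> d <= L ->
  ~ (arc_color w 0 a (c (w a) (w b)) \/ arc_color w b d (c (w a) (w b))) ->
  ~ (arc_color w 0 a (c (w d) (w e)) \/ arc_color w b d (c (w d) (w e))) ->
  ~ (arc_color w 0 a (c (w e) (w 0)) \/ arc_color w b d (c (w e) (w 0))) ->
  c (w a) (w b) <> c (w d) (w e) -> c (w a) (w b) <> c (w e) (w 0) ->
  c (w d) (w e) <> c (w e) (w 0) ->
  rainbow_cycle c (a + (d - b) + 3).
Proof.
move=> wP ae ebd dL x_fresh y_fresh z_fresh xy xz yz.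
set n := a + (d - b) + 3.
pose p i := if i <= a then i else if i <= a + (d - b) + 1 then b + i - a.+1 else e.
pose q i := if i < a then i else b + i - a.+1.
have chord1 : cycle_color w p n a = c (w a) (w b).
  rewrite /cycle_color modn_small /p; try lia.
  by case_ifs; try lia; do 2 f_equal; lia.
have chord2 : cycle_color w p n (a + (d - b) + 1) = c (w d) (w e).
  rewrite /cycle_color modn_small /p; try lia.
  by case_ifs; try lia; do 2 f_equal; lia.
have chord3 : cycle_color w p n n.-1 = c (w e) (w 0).
  rewrite /cycle_color prednK ?modnn /p; try lia.
  by case_ifs; try lia; do 2 f_equal; lia.
have edgeP i : i < n -> i \notin [:: a; a + (d - b) + 1; n.-1] ->
    (q i < a \/ b <= q i < d) /\ cycle_color w p n i = walk_color w (q i).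
  rewrite !inE => hi /norP[/eqP ? /norP[/eqP ? /eqP ?]].
  rewrite /cycle_color modn_small /p /q; last by lia.
  by case_ifs; try lia; split; try lia; rewrite /walk_color; do 2 f_equal; lia.
apply: (@rainbow_cycle_of_path w L n p q [:: a; a + (d - b) + 1; n.-1]) => //.
- lia.
- by move=> i hi; rewrite /p; case_ifs; lia.
- by move=> i j hi hj; rewrite /p; case_ifs; lia.
- by move=> i hi iS; have [hq ->] := edgeP i hi iS; split=> //; lia.
- move=> i j hi hj; rewrite !inE => /norP[/eqP ? /norP[/eqP ? /eqP ?]].
  move=> /norP[/eqP ? /norP[/eqP ? /eqP ?]].
  by rewrite /q; case_ifs; lia.
- move=> s i + hi iS; have [hq _] := edgeP i hi iS.
  rewrite !inE => /or3P[]/eqP->; rewrite ?chord1 ?chord2 ?chord3 => ex.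
  + by apply: x_fresh; case: hq => hq; [left | right]; exists (q i).
  + by apply: y_fresh; case: hq => hq; [left | right]; exists (q i).
  + by apply: z_fresh; case: hq => hq; [left | right]; exists (q i).
- move=> s s'; rewrite !inE => /or3P[]/eqP-> /or3P[]/eqP->;
    rewrite ?chord1 ?chord2 ?chord3 // => ex.
  all: first [by case: xy; rewrite ex | by case: xz; rewrite ex | by case: yz; rewrite ex].
Qed.

Section Periodic.
Variable m : nat.

Lemma periodic_mulE (T : Type) (f : nat -> T) :
  (forall i, f (i + m) = f i) -> forall q i, f (i + q * m) = f i.
Proof. by move=> fP; elim=> [|q IHq] i; rewrite ?addn0 // mulSnr addnA fP. Qed.

Lemma periodic_inj_window (T : Type) (f : nat -> T) :
  (forall i, f (i + m) = f i) ->
  (forall i j, i < m -> j < m -> f i = f j -> i = j) ->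
  forall i j, f i = f j -> i < j + m -> j < i + m -> i = j.
Proof.
move=> fP f_inj.
suff le_inj i j : f i = f j -> i <= j -> j < i + m -> i = j.
  move=> i j fij ij ji; case: (leqP i j) => h; first exact: le_inj.
  by apply/esym/le_inj; [rewrite fij | lia | lia].
move=> fij ij ji; have m_gt0 : 0 < m by lia.
have fmod x : f x = f (x %% m) by rewrite {1}(divn_eq x m) addnC periodic_mulE.
have : i %% m = j %% m by apply: f_inj; rewrite ?ltn_pmod // -!fmod.
move/eqP; rewrite eq_sym eqn_mod_dvd //; case: (posnP (j - i)) => [|ji0]; first lia.
by move=> /(dvdn_leq ji0); lia.
Qed.

(* A rainbow m-cycle read as an m-periodic walk, so that rotating the cycle is
   shifting the index. *)
Definition periodic_rainbow w :=
  [/\ forall i, w (i + m) = w i,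
      forall i j, i < m -> j < m -> w i = w j -> i = j &
      forall i j, i < m -> j < m -> walk_color w i = walk_color w j -> i = j].

Definition reflect_walk (w : nat -> V) i := w (m - i %% m).

Lemma periodic_rainbow_of_cycle : rainbow_cycle c m -> exists w, periodic_rainbow w.
Proof.
move=> [m3 [v [v_inj col_inj]]]; exists (fun i => v (i %% m)); split.
- by move=> i; rewrite modnDr.
- by move=> i j im jm; rewrite !modn_small //; apply: v_inj.
- by move=> i j im jm; rewrite /walk_color !(modn_small im) !(modn_small jm); apply: col_inj.
Qed.

Variable w : nat -> V.
Hypothesis wP : periodic_rainbow w.

Lemma walk_periodic i : w (i + m) = w i.
Proof. by case: wP. Qed.

Lemma walk_eq_upto_period i j : i = j \/ i = j + m \/ j = i + m -> w i = w j.
Proof. by case=> [->|[->|->]]; rewrite ?walk_periodic. Qed.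

Lemma walk_color_periodic i : walk_color w (i + m) = walk_color w i.
Proof. by rewrite /walk_color -addSn !walk_periodic. Qed.

Lemma walk_inj_window i j : w i = w j -> i < j + m -> j < i + m -> i = j.
Proof. by case: wP => wper w_inj _; apply: periodic_inj_window. Qed.

Lemma walk_color_inj_window i j :
  walk_color w i = walk_color w j -> i < j + m -> j < i + m -> i = j.
Proof. by case: wP => _ _ col_inj; apply: periodic_inj_window => //; apply: walk_color_periodic. Qed.

Lemma periodic_rainbow_shift s : periodic_rainbow (fun i => w (s + i)).
Proof.
split=> [i|i j im jm|i j im jm].
- by rewrite addnA walk_periodic.
- by move/walk_inj_window; lia.
- by rewrite !walk_color_shift => /walk_color_inj_window; lia.
Qed.

Lemma periodic_rainbow_path : 0 < m -> rainbow_path w m.-1.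
Proof.
move=> m_gt0; split=> i j im jm.
- by move/walk_inj_window; lia.
- by move/walk_color_inj_window; lia.
Qed.

Lemma arc_color_periodic lo hi x :
  arc_color w (lo + m) (hi + m) x <-> arc_color w lo hi x.
Proof.
split=> -[t ht <-].
- by exists (t - m); [lia | rewrite -walk_color_periodic subnK //; lia].
- by exists (t + m); [lia | rewrite walk_color_periodic].
Qed.

Lemma arc_color_walk_color lo hi t :
  arc_color w lo hi (walk_color w t) -> t < lo + m -> hi <= t + m -> lo <= t < hi.
Proof. by case=> t' ht' /walk_color_inj_window; lia. Qed.

Lemma arc_color_disjoint lo hi lo' hi' x :
  arc_color w lo hi x -> arc_color w lo' hi' x ->
  (hi <= lo' /\ hi' <= lo + m) \/ (hi' <= lo /\ hi <= lo' + m) -> False.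
Proof. by case=> t ht <- /arc_color_walk_color; lia. Qed.

Lemma reflect_walkE i : i < m -> reflect_walk w i = w (m - i).
Proof. by move=> im; rewrite /reflect_walk modn_small. Qed.

Lemma reflect_walk_eq i j : i + j = m \/ i + j = m + m -> reflect_walk w i = w j.
Proof.
move=> ij; rewrite /reflect_walk; apply: walk_eq_upto_period.
have [im | mi] := ltnP i m; first by rewrite modn_small //; lia.
have [i2m | ?] := ltnP i (m + m).
  by rewrite -(subnK mi) modnDr modn_small; lia.
by rewrite (_ : i = 0 + m + m) ?modnDr ?mod0n; lia.
Qed.

Lemma walk_color_reflect i : i < m -> walk_color (reflect_walk w) i = walk_color w (m.-1 - i).
Proof.
move=> im; rewrite /walk_color reflect_walkE // hc.
case: (ltnP i.+1 m) => [im'|]; first by rewrite reflect_walkE //; do 2 f_equal; lia.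
move=> mi; rewrite /reflect_walk (_ : i.+1 = m) ?modnn ?subn0; last by lia.
by rewrite -[w m]/(w (0 + m)) walk_periodic; do 2 f_equal; lia.
Qed.

Lemma periodic_rainbow_reflect : periodic_rainbow (reflect_walk w).
Proof.
split=> [i|i j im jm|i j im jm].
- by rewrite /reflect_walk modnDr.
- by rewrite !reflect_walkE // => /walk_inj_window; lia.
- by rewrite !walk_color_reflect // => /walk_color_inj_window; lia.
Qed.

End Periodic.

Section NoRainbowOddCycle.
Variable k : nat.
Hypothesis k_gt1 : 1 < k.
Hypothesis no_rainbow : ~ rainbow_cycle c (2 * k + 1).

Local Notation m := (6 * k - 3).
Local Notation side := (2 * k - 1).

Definition long_chord (w : nat -> V) i := c (w i) (w (i + 2 * k)).

Definition tri_chord (w : nat -> V) s := c (w s) (w (s + side)).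

Definition front_arc_color w s x := arc_color w s (s + k) x.

Lemma long_chord_on_arc w b :
  periodic_rainbow m w -> arc_color w b (b + 2 * k) (long_chord w b).
Proof.
move=> wP; apply: NNPP => off; apply: no_rainbow; rewrite addn1.
apply: (@rainbow_cycle_arc_chord (fun i => w (b + i)) m.-1) => /=.
- by apply: periodic_rainbow_path; [exact: periodic_rainbow_shift | lia].
- lia.
- by move=> /arc_color_shift; rewrite !addn0.
Qed.

Lemma long_chord_alternative w b : periodic_rainbow m w ->
  long_chord w b = walk_color w b \/ long_chord w (b + (4 * k - 2)) = walk_color w b.
Proof.
move=> wP; have [t1 ht1 e1] := long_chord_on_arc b wP.
have [t2 ht2 e2] := long_chord_on_arc (b + (4 * k - 2)) wP.
apply: NNPP => /not_or_and[ne1 ne2].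
have t1_neq : t1 <> b by move=> tb; apply: ne1; rewrite -e1 tb.
have t2_neq : t2 <> b + m by move=> tb; apply: ne2; rewrite -e2 tb (walk_color_periodic wP).
have x_eq : c (w (b + 1)) (w (b + (4 * k - 2))) = walk_color w t2.
  rewrite e2 /long_chord hc (_ : b + (4 * k - 2) + 2 * k = b + 1 + m); last by lia.
  by rewrite (walk_periodic wP).
have y_eq : c (w (b + 2 * k)) (w (b + 0)) = walk_color w t1 by rewrite e1 /long_chord hc addn0.
apply: no_rainbow; rewrite (_ : 2 * k + 1 = 1 + (4 * k - 2 - 2 * k) + 2); last by lia.
apply: (@rainbow_cycle_two_arcs (fun i => w (b + i)) m.-1) => /=; try lia.
- by apply: periodic_rainbow_path; [exact: periodic_rainbow_shift | lia].
- by rewrite x_eq => -[] /arc_color_shift /(arc_color_walk_color wP); lia.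
- by rewrite y_eq => -[] /arc_color_shift /(arc_color_walk_color wP); lia.
- by rewrite x_eq y_eq => /(walk_color_inj_window wP); lia.
Qed.

Lemma long_chord_periodic w i : periodic_rainbow m w -> long_chord w (i + m) = long_chord w i.
Proof. by move=> wP; rewrite /long_chord addnAC !(walk_periodic wP). Qed.

Lemma tri_chord_periodic w i : periodic_rainbow m w -> tri_chord w (i + m) = tri_chord w i.
Proof. by move=> wP; rewrite /tri_chord addnAC !(walk_periodic wP). Qed.

Lemma long_chord_orbit w : periodic_rainbow m w ->
  [/\ long_chord w (k - 1) = walk_color w (k - 1),
      long_chord w (3 * k - 2) = walk_color w (3 * k - 2) &
      long_chord w (5 * k - 3) = walk_color w (5 * k - 3)] \/
  [/\ long_chord w (k - 1) = walk_color w (3 * k - 2),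
      long_chord w (3 * k - 2) = walk_color w (5 * k - 3) &
      long_chord w (5 * k - 3) = walk_color w (k - 1)].
Proof.
move=> wP.
have c0 := long_chord_alternative (k - 1) wP.
have c1 := long_chord_alternative (3 * k - 2) wP.
have c2 := long_chord_alternative (5 * k - 3) wP.
rewrite (_ : k - 1 + (4 * k - 2) = 5 * k - 3) in c0; last by lia.
rewrite (_ : 3 * k - 2 + (4 * k - 2) = k - 1 + m) ?long_chord_periodic // in c1; last by lia.
rewrite (_ : 5 * k - 3 + (4 * k - 2) = 3 * k - 2 + m) ?long_chord_periodic // in c2; last by lia.
have neq i j : i < j < m -> walk_color w i <> walk_color w j.
  by move=> ij /(walk_color_inj_window wP); lia.
case: (classic (long_chord w (k - 1) = walk_color w (k - 1))) => h0; [left | right].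
- have h1 : long_chord w (3 * k - 2) = walk_color w (3 * k - 2).
    case: c1 => // e; exfalso; apply: (neq (k - 1) (3 * k - 2)); first lia.
    by rewrite -h0 e.
  split=> //; case: c2 => // e; exfalso; apply: (neq (3 * k - 2) (5 * k - 3)); first lia.
  by rewrite -h1 e.
- have h2 : long_chord w (5 * k - 3) = walk_color w (k - 1) by case: c0.
  have h1 : long_chord w (3 * k - 2) = walk_color w (5 * k - 3).
    case: c2 => // e; exfalso; apply: (neq (k - 1) (5 * k - 3)); first lia.
    by rewrite -h2 e.
  split=> //; case: c1 => // e; exfalso; apply: (neq (3 * k - 2) (5 * k - 3)); first lia.
  by rewrite -h1 e.
Qed.

Lemma tri_chord_on_front_arcs w s : periodic_rainbow m w ->
  long_chord w (s + (k - 1)) = walk_color w (s + (k - 1)) ->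
  front_arc_color w s (tri_chord w s) \/ front_arc_color w (s + side) (tri_chord w s).
Proof.
move=> wP mid; apply: NNPP => /not_or_and[off0 off1].
have x_eq : c (w (s + (k - 1))) (w (s + (3 * k - 1))) = walk_color w (s + (k - 1)).
  by rewrite -mid; congr c; apply: (walk_eq_upto_period wP); lia.
have y_eq : c (w (s + side)) (w (s + 0)) = tri_chord w s by rewrite hc addn0.
apply: no_rainbow; rewrite (_ : 2 * k + 1 = k - 1 + (3 * k - 1 - side) + 2); last by lia.
apply: (@rainbow_cycle_two_arcs (fun i => w (s + i)) m.-1) => /=; try lia.
- by apply: periodic_rainbow_path; [exact: periodic_rainbow_shift | lia].
- by rewrite x_eq => -[] /arc_color_shift /(arc_color_walk_color wP); lia.
- rewrite y_eq => -[] /arc_color_shift /arc_color_widen h; [apply: off0 | apply: off1];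
    apply: h; lia.
- by rewrite x_eq y_eq => e; apply: off0; exists (s + (k - 1)) => //; lia.
Qed.

Lemma tri_chords_on_far_arc w s : periodic_rainbow m w ->
  arc_color w (s + side + side) (s + m) (tri_chord w s) \/
  arc_color w (s + side + side) (s + m) (tri_chord w (s + side)) \/
  tri_chord w s = tri_chord w (s + side).
Proof.
move=> wP; apply: NNPP => /not_or_and[off0 /not_or_and[off1 ne]].
have x_eq : c (w (s + side + side + side)) (w (s + side + side + (side + side))) =
            tri_chord w s.
  by congr c; apply: (walk_eq_upto_period wP); lia.
have y_eq : c (w (s + side + side + (side + side))) (w (s + side + side + 0)) =
            tri_chord w (s + side).
  by congr c; apply: (walk_eq_upto_period wP); lia.
apply: no_rainbow; rewrite (_ : 2 * k + 1 = side + (side + side - (side + side)) + 2); last by lia.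
apply: (@rainbow_cycle_two_arcs (fun i => w (s + side + side + i)) m.-1) => /=; try lia.
- by apply: periodic_rainbow_path; [exact: periodic_rainbow_shift | lia].
- rewrite x_eq => -[]; last exact: arc_color_empty.
  by move=> /arc_color_shift /arc_color_widen h; apply: off0; apply: h; lia.
- rewrite y_eq => -[]; last exact: arc_color_empty.
  by move=> /arc_color_shift /arc_color_widen h; apply: off1; apply: h; lia.
- by rewrite x_eq y_eq.
Qed.

Lemma tri_chords_on_near_arcs w s : periodic_rainbow m w ->
  long_chord w (s + (k - 1)) = walk_color w (s + (k - 1)) ->
  (front_arc_color w s (tri_chord w s) \/
   arc_color w (s + side + k) (s + side + side) (tri_chord w s)) \/
  (front_arc_color w s (tri_chord w (s + side)) \/
   arc_color w (s + side + k) (s + side + side) (tri_chord w (s + side))) \/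
  tri_chord w s = tri_chord w (s + side).
Proof.
move=> wP mid; apply: NNPP => /not_or_and[off0 /not_or_and[off1 ne]].
have x_eq : c (w (s + (k - 1))) (w (s + (3 * k - 1))) = walk_color w (s + (k - 1)).
  by rewrite -mid; congr c; apply: (walk_eq_upto_period wP); lia.
have y_eq : c (w (s + (4 * k - 2))) (w (s + side)) = tri_chord w (s + side).
  by rewrite hc; congr c; apply: (walk_eq_upto_period wP); lia.
have z_eq : c (w (s + side)) (w (s + 0)) = tri_chord w s by rewrite hc addn0.
apply: no_rainbow; rewrite (_ : 2 * k + 1 = k - 1 + (4 * k - 2 - (3 * k - 1)) + 3); last by lia.
apply: (@rainbow_cycle_three_arcs (fun i => w (s + i)) m.-1 _ side) => /=; try lia.
- by apply: periodic_rainbow_path; [exact: periodic_rainbow_shift | lia].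
- by rewrite x_eq => -[] /arc_color_shift /(arc_color_walk_color wP); lia.
- rewrite y_eq => -[] /arc_color_shift /arc_color_widen h; apply: off1; [left | right];
    apply: h; lia.
- rewrite z_eq => -[] /arc_color_shift /arc_color_widen h; apply: off0; [left | right];
    apply: h; lia.
- by rewrite x_eq y_eq => e; apply: off1; left; exists (s + (k - 1)) => //; lia.
- by rewrite x_eq z_eq => e; apply: off0; left; exists (s + (k - 1)) => //; lia.
- by rewrite y_eq z_eq => /esym.
Qed.

Lemma tri_chord_front_step w s : periodic_rainbow m w ->
  long_chord w (s + (k - 1)) = walk_color w (s + (k - 1)) ->
  long_chord w (s + side + (k - 1)) = walk_color w (s + side + (k - 1)) ->
  [/\ front_arc_color w s (tri_chord w s) ->
        front_arc_color w (s + side + side) (tri_chord w (s + side)),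
      front_arc_color w (s + side) (tri_chord w s) ->
        front_arc_color w (s + side) (tri_chord w (s + side)) &
      front_arc_color w s (tri_chord w s) \/ front_arc_color w (s + side) (tri_chord w s)].
Proof.
move=> wP mid0 mid1.
have next := tri_chord_on_front_arcs wP mid1.
have disjoint := arc_color_disjoint wP.
split=> [r0F0 | r0F1 | ]; last exact: tri_chord_on_front_arcs.
- case: (tri_chords_on_far_arc s wP) => [r0A2 | [rmA2 | r0rm]].
  + by exfalso; apply: (disjoint _ _ _ _ _ r0F0 r0A2); lia.
  + by case: next => // rmF1; exfalso; apply: (disjoint _ _ _ _ _ rmF1 rmA2); lia.
  + rewrite -r0rm in next; exfalso.
    by case: next => h; apply: (disjoint _ _ _ _ _ r0F0 h); lia.
- case: (tri_chords_on_near_arcs wP mid0) => [[] h | [[] h | <- //]]; exfalso.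
  + by apply: (disjoint _ _ _ _ _ r0F1 h); lia.
  + by apply: (disjoint _ _ _ _ _ r0F1 h); lia.
  + by case: next => h'; apply: (disjoint _ _ _ _ _ h h'); lia.
  + by case: next => h'; apply: (disjoint _ _ _ _ _ h h'); lia.
Qed.

Lemma no_forward_orbit w : periodic_rainbow m w ->
  long_chord w (k - 1) = walk_color w (k - 1) ->
  long_chord w (3 * k - 2) = walk_color w (3 * k - 2) ->
  long_chord w (5 * k - 3) = walk_color w (5 * k - 3) -> False.
Proof.
move=> wP h0 h1 h2.
have m0 : long_chord w (0 + (k - 1)) = walk_color w (0 + (k - 1)) by rewrite add0n.
have m1 : long_chord w (0 + side + (k - 1)) = walk_color w (0 + side + (k - 1)).
  by rewrite (_ : 0 + side + (k - 1) = 3 * k - 2) //; lia.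
have m2 : long_chord w (0 + side + side + (k - 1)) = walk_color w (0 + side + side + (k - 1)).
  by rewrite (_ : 0 + side + side + (k - 1) = 5 * k - 3) //; lia.
have m3 : long_chord w (0 + side + side + side + (k - 1)) =
          walk_color w (0 + side + side + side + (k - 1)).
  rewrite (_ : 0 + side + side + side + (k - 1) = k - 1 + m); last by lia.
  by rewrite long_chord_periodic // walk_color_periodic.
have [A0 B0 C0] := tri_chord_front_step wP m0 m1.
have [A1 B1 _] := tri_chord_front_step wP m1 m2.
have [A2 B2 _] := tri_chord_front_step wP m2 m3.
have r3 : tri_chord w (0 + side + side + side) = tri_chord w 0.
  by rewrite (_ : 0 + side + side + side = 0 + m) ?tri_chord_periodic //; lia.
have F_periodic s s' x : s = s' + m -> front_arc_color w s x -> front_arc_color w s' x.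
  by move=> ->; rewrite /front_arc_color addnAC => /(arc_color_periodic wP).
have F01 x : front_arc_color w 0 x -> front_arc_color w (0 + side) x -> False.
  by move=> h h'; apply: (arc_color_disjoint wP h h'); lia.
case: C0 => [r0F0 | r0F1]; apply: (F01 (tri_chord w 0)) => //; rewrite -r3.
- by apply: (F_periodic (0 + side + side + side + side)); [lia | apply/A2/B1/A0].
- by apply: (F_periodic (0 + side + side + side)); [lia | apply/B2/A1/B0].
Qed.

Lemma no_backward_orbit w : periodic_rainbow m w ->
  long_chord w (k - 1) = walk_color w (3 * k - 2) ->
  long_chord w (3 * k - 2) = walk_color w (5 * k - 3) ->
  long_chord w (5 * k - 3) = walk_color w (k - 1) -> False.
Proof.
move=> wP h0 h1 h2; apply: (no_forward_orbit (periodic_rainbow_reflect wP)).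
- rewrite (walk_color_reflect wP); last by lia.
  rewrite (_ : m.-1 - (k - 1) = 5 * k - 3); last by lia.
  by rewrite -h1 /long_chord hc; congr c; apply: (reflect_walk_eq wP); lia.
- rewrite (walk_color_reflect wP); last by lia.
  rewrite (_ : m.-1 - (3 * k - 2) = 3 * k - 2); last by lia.
  by rewrite -h0 /long_chord hc; congr c; apply: (reflect_walk_eq wP); lia.
- rewrite (walk_color_reflect wP); last by lia.
  rewrite (_ : m.-1 - (5 * k - 3) = k - 1); last by lia.
  by rewrite -h2 /long_chord hc; congr c; apply: (reflect_walk_eq wP); lia.
Qed.

Lemma no_rainbow_cycle_6k_sub3 : ~ rainbow_cycle c m.
Proof.
move=> /periodic_rainbow_of_cycle [w wP].
case: (long_chord_orbit wP) => -[h0 h1 h2].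
- exact: no_forward_orbit wP h0 h1 h2.
- exact: no_backward_orbit wP h0 h1 h2.
Qed.

End NoRainbowOddCycle.
End Walks.

Theorem lemma12 (k : nat) (hk : 3 < 2 * k + 1)
    (V C : Type) (c : V -> V -> C) (hc : edge_coloring c) :
  ~ rainbow_cycle c (2 * k + 1) -> ~ rainbow_cycle c (3 * (2 * k + 1) - 6).
Proof.
move=> no_rainbow; rewrite (_ : 3 * (2 * k + 1) - 6 = 6 * k - 3); last by lia.
by apply: no_rainbow_cycle_6k_sub3 => //; lia.
Qed.
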